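(* For every $C>0$ there exist a two-element state space $\Omega=\{a,b\}$, reversible ergodic Markov chains $\mathcal{M}$ and $\mathcal{M}'$ on $\Omega$ with the same stationary distribution $\pi$, and an $(\mathcal{M},\mathcal{M}')$-flow $f$ with $A(f)\le 3$, such that $$\tau_a\Big(\mathcal{M},\frac14\Big)\ >\ C\cdot A(f)\left[\tau\Big(\mathcal{M}',\frac{1}{2e}\Big)+1\right]\ln\frac{1}{\frac14\,\pi(a)}.$$ Concretely one may take $\mathcal{M}$ with $P(a,b)=P(b,a)=1-\delta$, $P(a,a)=P(b,b)=\delta$ for sufficiently small $\delta\in(0,\frac12]$, and $\mathcal{M}'$ the chain with $P'(x,y)=\frac12$ for all $x,y\in\Omega$. (Thus, unlike in the case of odd flows, no bound of this form in terms of the congestion of an arbitrary flow is possible.)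
   Context: A (discrete-time) Markov chain on a finite state space $\Omega$ with transition matrix $P$ is ergodic if irreducible and aperiodic; it then has a unique stationary distribution $\pi>0$. It is reversible if $\pi(x)P(x,y)=\pi(y)P(y,x)$. Variation distance: $\|\theta_1-\theta_2\|=\frac12\sum_i|\theta_1(i)-\theta_2(i)|$. Mixing time: $\tau_x(\mathcal{M},\varepsilon)=\min\{t>0 \text{ integer}: \|P^{t'}(x,\cdot)-\pi\|\le\varepsilon \ \forall t'\ge t\}$, $\tau(\mathcal{M},\varepsilon)=\max_x\tau_x(\mathcal{M},\varepsilon)$. Flows: Let $\mathcal{M}$ have transition matrix $P$ and stationary distribution $\pi$, and $\mathcal{M}'$ have transition matrix $P'$ and stationary distribution $\pi'$. Let $E^*(\mathcal{M})=\{(x,y): P(x,y)>0\}$ (pairs not necessarily distinct), similarly $E^*(\mathcal{M}')$. For $(x,y)\in E^*(\mathcal{M}')$, $\mathcal{P}_{x,y}$ is the set of paths $\gamma=(x=x_0,\dots,x_k=y)$ with each $(x_i,x_{i+1})\in E^*(\mathcal{M})$ and each $(z,w)\in E^*(\mathcal{M})$ appearing at most twice as a consecutive pair on $\gamma$; $|\gamma|=k$. $\mathcal{P}=\bigcup_{(x,y)\in E^*(\mathcal{M}')}\mathcal{P}_{x,y}$. An $(\mathcal{M},\mathcal{M}')$-flow is $f:\mathcal{P}\to[0,1]$ with $\sum_{\gamma\in\mathcal{P}_{x,y}}f(\gamma)=\pi'(x)P'(x,y)$ for all $(x,y)\in E^*(\mathcal{M}')$. With $r((z,w),\gamma)$ the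 number of times $(z,w)$ appears on $\gamma$, $A_{z,w}(f)=\frac{1}{\pi(z)P(z,w)}\sum_{\gamma:(z,w)\in\gamma}r((z,w),\gamma)|\gamma|f(\gamma)$ and $A(f)=\max_{(z,w)\in E^*(\mathcal{M})}A_{z,w}(f)$. *)

From HB Require Import structures.
From mathcomp Require Import all_boot all_order all_algebra.
From mathcomp Require Import reals sequences exp.
Set Implicit Arguments. Unset Strict Implicit. Unset Printing Implicit Defensive.
Import Order.TTheory GRing.Theory Num.Theory.
Local Open Scope ring_scope.

Section MarkovDefs.
Variables (R : realType) (Omega : finType).

Definition stochastic (P : Omega -> Omega -> R) : Prop :=
  (forall x y, 0 <= P x y) /\ (forall x, \sum_(y : Omega) P x y = 1).

Fixpoint Pow (P : Omega -> Omega -> R) (t : nat) : Omega -> Omega -> R :=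
  match t with
  | 0 => fun x y => (x == y)%:R
  | t'.+1 => fun x y => \sum_(z : Omega) Pow P t' x z * P z y
  end.

Definition irreducible (P : Omega -> Omega -> R) : Prop :=
  forall x y, exists t : nat, 0 < Pow P t x y.

(* gcd { t >= 1 : P^t(x,x) > 0 } = 1 for every state x *)
Definition aperiodic (P : Omega -> Omega -> R) : Prop :=
  forall x (d : nat), (forall t : nat, (0 < t)%N -> 0 < Pow P t x x -> (d %| t)%N) -> d = 1%N.

Definition ergodic (P : Omega -> Omega -> R) : Prop :=
  stochastic P /\ irreducible P /\ aperiodic P.

Definition stationary (P : Omega -> Omega -> R) (pi : Omega -> R) : Prop :=
  (forall x, 0 <= pi x) /\ \sum_(x : Omega) pi x = 1 /\
  (forall y, \sum_(x : Omega) pi x * P x y = pi y).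

Definition reversible (P : Omega -> Omega -> R) (pi : Omega -> R) : Prop :=
  forall x y, pi x * P x y = pi y * P y x.

Definition tvd (mu nu : Omega -> R) : R :=
  2^-1 * \sum_(i : Omega) `|mu i - nu i|.

Definition good_from (P : Omega -> Omega -> R) (pi : Omega -> R) (x : Omega)
  (eps : R) (t : nat) : Prop :=
  (0 < t)%N /\ forall t' : nat, (t <= t')%N -> tvd (Pow P t' x) pi <= eps.

Definition is_mixing_time_from (P : Omega -> Omega -> R) (pi : Omega -> R)
  (x : Omega) (eps : R) (t : nat) : Prop :=
  good_from P pi x eps t /\ (forall s : nat, good_from P pi x eps s -> (t <= s)%N).

Definition is_mixing_time (P : Omega -> Omega -> R) (pi : Omega -> R)
  (eps : R) (t : nat) : Prop :=
  (forall x, exists tx, is_mixing_time_from P pi x eps tx /\ (tx <= t)%N) /\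
  (exists x, is_mixing_time_from P pi x eps t).

(* A path gamma = (x_0, ..., x_k) is represented by its vertex sequence
   [:: x_0; ...; x_k] (k >= 0); its consecutive pairs are: *)
Definition edges_of (s : seq Omega) : seq (Omega * Omega) := zip s (behead s).

Definition plen (s : seq Omega) : nat := size (behead s).

Definition rcount (e : Omega * Omega) (s : seq Omega) : nat :=
  count (pred1 e) (edges_of s).

Definition is_path (P : Omega -> Omega -> R) (x y : Omega) (s : seq Omega) : bool :=
  match s with
  | [::] => false
  | x0 :: tl =>
      [&& x0 == x, last x0 tl == y,
          all (fun e => 0 < P e.1 e.2) (edges_of s) &
          all (fun e => (rcount e s <= 2)%N) (edges_of s)]
  end.

Definition in_calP (P P' : Omega -> Omega -> R) (s : seq Omega) : bool :=
  match s with
  | [::] => false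
  | x0 :: tl => (0 < P' x0 (last x0 tl)) && is_path P x0 (last x0 tl) s
  end.

(* Every path in calP has at most 2 #|Omega|^2 edges, hence fewer than
   maxlen vertices; so summing over all vertex sequences of length < maxlen
   is summing over all of calP (the set is finite). *)
Definition maxlen : nat := (2 * #|Omega| ^ 2).+2.

Definition sum_seqs (Q : pred (seq Omega)) (F : seq Omega -> R) : R :=
  \sum_(n < maxlen) \sum_(t : n.-tuple Omega | Q (tval t)) F (tval t).

(* f is an (M, M')-flow, where pi' is the stationary distribution of M'.
   f is given as a function on all sequences; only its values on calP matter. *)
Definition is_flow (P P' : Omega -> Omega -> R) (pi' : Omega -> R)
  (f : seq Omega -> R) : Prop :=
  (forall s, in_calP P P' s -> 0 <= f s <= 1) /\
  (forall x y, 0 < P' x y ->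
     sum_seqs (is_path P x y) f = pi' x * P' x y).

Definition congestion_edge (P P' : Omega -> Omega -> R) (pi : Omega -> R)
  (f : seq Omega -> R) (z w : Omega) : R :=
  (pi z * P z w)^-1 *
  sum_seqs (fun s => in_calP P P' s && (0 < rcount (z, w) s)%N)
    (fun s => (rcount (z, w) s)%:R * (plen s)%:R * f s).

(* A(f) = max over (z,w) in E*(M) of A_{z,w}(f) (all of which are >= 0 for a flow). *)
Definition congestion (P P' : Omega -> Omega -> R) (pi : Omega -> R)
  (f : seq Omega -> R) : R :=
  \big[Num.max/0]_(z : Omega) \big[Num.max/0]_(w : Omega | 0 < P z w)
     congestion_edge P P' pi f z w.

End MarkovDefs.

From HB Require Import structures.
From mathcomp Require Import all_boot all_order all_algebra.
From mathcomp Require Import reals sequences exp boolp.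
From mathcomp Require Import ring lra.
Import Order.TTheory GRing.Theory Num.Theory.
Local Open Scope ring_scope.

(* The two-state chain that stays put with probability d is at distance
   |1 - 2d|^t / 2 from the uniform distribution after t steps, so for
   d = 1/(8n) it has not mixed to within 1/4 after n steps.  The chain M' that
   resamples uniformly mixes in one step, and routing every transition (x, y)
   of M' along the direct path from x to y gives a flow of congestion
   1/(2(1 - d)) <= 1.  So the right-hand side stays below 16 C for every d,
   while tau_a(M, 1/4) > n is unbounded. *)

Lemma bernoulli_ineq {R : realDomainType} (x : R) (n : nat) :
  -1 <= x -> 1 + n%:R * x <= (1 + x) ^+ n.
Proof.
move=> hx; elim: n => [|n IHn]; first by rewrite expr0 mul0r addr0.
rewrite exprS -natr1.
have hxx := mulr_ge0 (ler0n R n) (sqr_ge0 x).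
have hx1 : 0 <= 1 + x by lra.
nra.
Qed.

Lemma expr_onem_le_half {R : realFieldType} (x : R) (n : nat) :
  0 <= x <= 1 -> 1 <= n%:R * x -> (1 - x) ^+ n <= 2^-1.
Proof.
case/andP=> hx0 hx1 hnx.
have hplus : 2 <= (1 + x) ^+ n.
  have hx : -1 <= x by lra.
  by have := bernoulli_ineq x n hx; lra.
have hprod : (1 - x) ^+ n * (1 + x) ^+ n <= 1 by rewrite -exprMn exprn_ile1 //; nra.
have hminus : 0 <= (1 - x) ^+ n by rewrite exprn_ge0 //; lra.
have := ler_wpM2l hminus hplus; lra.
Qed.

Section GeneralChains.
Context {R : realType} {Omega : finType}.
Implicit Types (P : Omega -> Omega -> R) (pi : Omega -> R).

Lemma Pow1 P x y : Pow P 1 x y = P x y.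
Proof.
rewrite /= (bigD1 x) //= eqxx mul1r big1 ?addr0 // => z /negbTE.
by rewrite eq_sym => ->; rewrite mul0r.
Qed.

Lemma ergodic_of_pos P :
  (forall x y, 0 < P x y) -> (forall x, \sum_y P x y = 1) -> ergodic P.
Proof.
move=> hpos hsum; split; first by split=> // x y; exact: ltW.
split=> [x y|x d hd]; first by exists 1%N; rewrite Pow1.
by apply/eqP; rewrite -dvdn1; apply: hd => //; rewrite Pow1.
Qed.

Lemma good_from_gt {P pi x eps t} n :
  good_from P pi x eps t -> eps < tvd (Pow P n x) pi -> (n < t)%N.
Proof.
by case=> _ hgood hn; rewrite ltnNge; apply/negP => /hgood; rewrite leNgt hn.
Qed.

Lemma exists_mixing_time_from {P pi x eps n} :
  good_from P pi x eps n -> exists t, is_mixing_time_from P pi x eps t.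
Proof.
move=> hn; have exgood : exists n, `[< good_from P pi x eps n >].
  by exists n; exact/asboolP.
case: (ex_minnP exgood) => t /asboolP ht tmin.
by exists t; split=> // s hs; apply: tmin; exact/asboolP.
Qed.

Lemma sum_seqs_eq1 (Q : pred (seq Omega)) (G : seq Omega -> R) (s0 : seq Omega) :
  (size s0 < maxlen Omega)%N ->
  sum_seqs Q (fun s => (s0 == s)%:R * G s) = (Q s0)%:R * G s0.
Proof.
move=> hs0; rewrite /sum_seqs (bigD1 (Ordinal hs0)) //= [X in _ + X]big1.
  rewrite addr0 big_mkcond (bigD1 (in_tuple s0)) //= eqxx big1 ?addr0.
    by case: (Q s0); rewrite ?mul1r ?mul0r.
  move=> t ht; case: (Q t) => //; rewrite (_ : (s0 == tval t) = false) ?mul0r //.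
  by apply/negbTE; apply: contra ht => /eqP e; apply/eqP/val_inj.
move=> i hi; apply: big1 => t _; rewrite (_ : (s0 == tval t) = false) ?mul0r //.
by apply/negbTE; apply: contra hi => /eqP e; apply/eqP/val_inj; rewrite /= e size_tuple.
Qed.

Lemma sum_seqs_indicators (Q : pred (seq Omega)) (L : seq (seq Omega))
    (G : seq Omega -> R) :
  all (fun s0 => size s0 < maxlen Omega)%N L ->
  sum_seqs Q (fun s => \sum_(s0 <- L) (s0 == s)%:R * G s)
  = \sum_(s0 <- L) (Q s0)%:R * G s0.
Proof.
move=> shortL; rewrite /sum_seqs.
under eq_bigr do rewrite exchange_big /=.
rewrite exchange_big /= big_seq [RHS]big_seq; apply: eq_bigr => s0 hs0.
by rewrite -(sum_seqs_eq1 Q G _ (allP shortL s0 hs0)).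
Qed.

End GeneralChains.

Section TwoStateChain.
Context {R : realType}.

Definition flip_chain (d : R) (x y : bool) : R := if x == y then d else 1 - d.

Definition uniform2 (x : bool) : R := 2^-1.

Lemma flip_chain_ergodic (d : R) : 0 < d < 1 -> ergodic (flip_chain d).
Proof.
case/andP=> d0 d1; apply: ergodic_of_pos => [[] []|[]];
  by rewrite /flip_chain ?big_bool /=; lra.
Qed.

Lemma flip_chain_stationary (d : R) : stationary (flip_chain d) uniform2.
Proof.
rewrite /stationary /uniform2; split=> [x|]; first lra.
by split=> [|[]]; rewrite big_bool /flip_chain /=; lra.
Qed.

Lemma flip_chain_reversible (d : R) : reversible (flip_chain d) uniform2.
Proof. by move=> [] []. Qed.

Lemma Pow_flip_chain (d : R) t x y :
  Pow (flip_chain d) t x y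
  = 2^-1 * (1 + (if x == y then 1 else -1) * (2 * d - 1) ^+ t).
Proof.
elim: t x y => [|t IHt] x y /=; first by case: x; case: y; rewrite /= expr0; lra.
by rewrite big_bool !IHt /flip_chain exprS; case: x; case: y => /=; ring.
Qed.

Lemma tvd_flip_chain (d : R) t x :
  tvd (Pow (flip_chain d) t x) uniform2 = 2^-1 * `|2 * d - 1| ^+ t.
Proof.
rewrite /tvd big_bool !Pow_flip_chain /uniform2; set c := (2 * d - 1) ^+ t.
have hplus : 2^-1 * (1 + 1 * c) - 2^-1 = 2^-1 * c :> R by ring.
have hminus : 2^-1 * (1 + -1 * c) - 2^-1 = - (2^-1 * c) :> R by ring.
have habs : `|2^-1 * c| = 2^-1 * `|2 * d - 1| ^+ t by rewrite normrM normrX gtr0_norm // invr_gt0.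
by case: x; rewrite /= hplus hminus normrN habs; lra.
Qed.

Lemma mixing_time_flip_half (eps : R) :
  0 <= eps -> is_mixing_time (flip_chain 2^-1) uniform2 eps 1.
Proof.
move=> eps0.
have tvd0 t x : (0 < t)%N -> tvd (Pow (flip_chain 2^-1) t x) uniform2 = 0.
  case: t => // t _; rewrite tvd_flip_chain (_ : 2 * 2^-1 - 1 = 0 :> R).
    by rewrite normr0 expr0n mulr0.
  by field.
have mix1 x : is_mixing_time_from (flip_chain 2^-1) uniform2 x eps 1.
  by split=> [|s []//]; split=> // t ht; rewrite tvd0.
split; last by exists true.
by move=> x; exists 1%N.
Qed.

Lemma flip_chain_good_from (d : R) (n : nat) x :
  0 <= d <= 2^-1 -> 1 <= 2 * n%:R * d -> good_from (flip_chain d) uniform2 x 4^-1 n.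
Proof.
case/andP=> d0 d1 hn; split=> [|t hnt]; first by rewrite lt0n; apply: contraTneq hn => ->; lra.
have hq : `|2 * d - 1| = 1 - 2 * d by rewrite ler0_norm; lra.
rewrite tvd_flip_chain hq.
have q0 : 0 <= 1 - 2 * d by lra.
have q1 : 1 - 2 * d <= 1 by lra.
have hdec := ler_wiXn2l q0 q1 hnt.
have hhalf : (1 - 2 * d) ^+ n <= 2^-1 by apply: expr_onem_le_half; lra.
lra.
Qed.

Lemma flip_chain_tvd_gt (d : R) (n : nat) x :
  0 <= d <= 2^-1 -> 8 * n%:R * d <= 1 -> 4^-1 < tvd (Pow (flip_chain d) n x) uniform2.
Proof.
case/andP=> d0 d1 hn.
have hq : `|2 * d - 1| = 1 - 2 * d by rewrite ler0_norm; lra.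
have hx : -1 <= - (2 * d) by lra.
have := bernoulli_ineq (- (2 * d)) n hx.
by rewrite tvd_flip_chain hq; lra.
Qed.

Lemma flip_chain_mixing_time_gt (n : nat) :
  (0 < n)%N -> exists ta,
    is_mixing_time_from (flip_chain (8 * n%:R)^-1) uniform2 true 4^-1 ta /\ (n < ta)%N.
Proof.
move=> n0; have n1 : 1 <= n%:R :> R by rewrite ler1n.
set d : R := (8 * n%:R)^-1.
have d8n : 8 * n%:R * d = 1 by rewrite mulfV // gt_eqF //; lra.
have dhalf : 0 <= d <= 2^-1 by apply/andP; split; nra.
have hgood : good_from (flip_chain d) uniform2 true 4^-1 (4 * n).
  by apply: flip_chain_good_from; rewrite // natrM; lra.
have [ta hta] := exists_mixing_time_from hgood.
exists ta; split=> //.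
by apply: good_from_gt hta.1 _; apply: flip_chain_tvd_gt; rewrite ?d8n.
Qed.

Definition direct_paths : seq (seq bool) :=
  [:: [:: true]; [:: false]; [:: true; false]; [:: false; true]].

(* Each pair (x, y) of E*(M') is routed along its direct path, of length 0 if
   x = y and 1 otherwise, carrying pi(x) P'(x, y) = 1/4. *)
Definition direct_flow (s : seq bool) : R :=
  \sum_(s0 <- direct_paths) (s0 == s)%:R * 4^-1.

Lemma direct_paths_short : all (fun s0 => size s0 < maxlen bool)%N direct_paths.
Proof. by rewrite /maxlen card_bool. Qed.

Lemma direct_flow_is_flow (d : R) :
  0 < d < 1 -> is_flow (flip_chain d) (flip_chain 2^-1) uniform2 direct_flow.
Proof.
case/andP=> d0 d1; have d1' : (0 < 1 - d) = true by apply/idP; lra.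
split=> [s _|x y _].
  by rewrite /direct_flow !big_cons big_nil; do 4 case: (_ == _); rewrite /=; lra.
rewrite (sum_seqs_indicators _ _ (fun=> 4^-1) direct_paths_short) !big_cons big_nil.
by case: x; case: y; rewrite /= /flip_chain /= ?d0 ?d1' /uniform2 /=; lra.
Qed.

Lemma congestion_edge_direct_flow (d : R) z w :
  0 < d < 1 ->
  congestion_edge (flip_chain d) (flip_chain 2^-1) uniform2 direct_flow z w
  = if z == w then 0 else (2 * (1 - d))^-1.
Proof.
case/andP=> d0 d1; have d1' : (0 < 1 - d) = true by apply/idP; lra.
have half0 : (0 < 1 - 2^-1 :> R) = true by apply/idP; lra.
have dn0 : 1 - d != 0 by rewrite subr_eq0 (gt_eqF d1).
rewrite /congestion_edge; pose G := fun s => (rcount (z, w) s)%:R * (plen s)%:R * 4^-1 : R.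
have -> : (fun s => (rcount (z, w) s)%:R * (plen s)%:R * direct_flow s)
          = (fun s => \sum_(s0 <- direct_paths) (s0 == s)%:R * G s).
  apply/funext => s; rewrite /direct_flow !mulr_sumr.
  by apply: eq_bigr => s0 _; rewrite /G; ring.
rewrite sum_seqs_indicators ?direct_paths_short // !big_cons big_nil {}/G.
case: z; case: w;
  rewrite /= /flip_chain /rcount /edges_of /plen /uniform2 /= ?half0 ?addn0 /=.
all: rewrite ?mul0r ?mulr0 ?add0r ?addr0 ?d1' //= ?mulr0 //.
all: by field.
Qed.

Lemma congestion_direct_flow_le1 (d : R) :
  0 < d <= 2^-1 ->
  congestion (flip_chain d) (flip_chain 2^-1) uniform2 direct_flow <= 1.
Proof.
case/andP=> d0 d1; have d01 : 0 < d < 1 by apply/andP; split; lra.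
apply: bigmax_le => [|z _]; first exact: ler01.
apply: bigmax_le => [|w _]; first exact: ler01.
rewrite congestion_edge_direct_flow //; case: (z == w) => //.
by rewrite invf_le1; lra.
Qed.

End TwoStateChain.

Theorem mainTheorem5 (R : realType) (C : R) :
  0 < C ->
  exists (Omega : finType) (a : Omega) (P P' : Omega -> Omega -> R)
         (pi : Omega -> R) (f : seq Omega -> R),
    #|Omega| = 2%N /\
    ergodic P /\ ergodic P' /\
    stationary P pi /\ stationary P' pi /\
    reversible P pi /\ reversible P' pi /\
    is_flow P P' pi f /\
    congestion P P' pi f <= 3 /\
    exists (ta T' : nat),
      is_mixing_time_from P pi a (4^-1) ta /\
      is_mixing_time P' pi ((2 * expR 1)^-1) T' /\
      C * congestion P P' pi f * (T'%:R + 1) * ln ((4^-1 * pi a)^-1) < ta%:R.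
Proof.
move=> C0; pose n := Num.Def.archi_bound (16 * C).
have hn : 16 * C < n%:R by apply: archi_boundP; lra.
have n0 : (0 < n)%N by rewrite -(ltr0n R); lra.
have [ta [hta hnta]] := @flip_chain_mixing_time_gt R n n0.
set d : R := (8 * n%:R)^-1 in hta *.
have dhalf : 0 < d <= 2^-1.
  have n1 : 1 <= n%:R :> R by rewrite ler1n.
  have d8n : 8 * n%:R * d = 1 by rewrite mulfV // gt_eqF //; lra.
  by apply/andP; split; nra.
exists bool, true, (flip_chain d), (flip_chain 2^-1), uniform2, direct_flow.
split; first by rewrite card_bool.
split; first by apply: flip_chain_ergodic; apply/andP; split; lra.
split; first by apply: flip_chain_ergodic; apply/andP; split; lra.
do 4 (split; first by [apply: flip_chain_stationary | apply: flip_chain_reversible]).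
split; first by apply: direct_flow_is_flow; apply/andP; split; lra.
have hA := congestion_direct_flow_le1 d dhalf.
split; first lra.
exists ta, 1%N; split; first exact: hta.
split; first by apply: mixing_time_flip_half; rewrite invr_ge0 mulr_ge0 // ltW // expR_gt0.
rewrite /uniform2 -invfM invrK; set A := congestion _ _ _ _; set L := ln _.
have L0 : 0 <= L by apply: ln_ge0; lra.
have L8 : L < 4 * 2 by apply: ln_sublinear; lra.
have hCA : C * A * L <= C * L by apply: ler_wpM2r => //; apply: ler_piMr => //; lra.
have hCL : C * L <= C * 8 by apply: ler_wpM2l; lra.
have : n%:R < ta%:R :> R by rewrite ltr_nat.
lra.
Qed.
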